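(* Let $S$ be a reduced affine monoid. Then $c(S)$ is the minimal non-negative integer $d$ such that the kernel of $\pi_R:R[x_a\mid a\in\mathcal{A}(S)]\to R[S]$ is generated as an ideal by binomials of degree at most $d$, for some commutative ring $R$ (with identity); moreover, for a given $d$ this condition holds for some commutative ring $R$ if and only if it holds for every commutative ring $R$.
   Context: A monoid is a commutative cancellative semigroup with identity, written multiplicatively; it is affine if it is a finitely generated submonoid of a finitely generated free abelian group, and reduced if the identity is its only invertible element. $\mathcal{A}(S)$ is the finite set of atoms of $S$; for $\alpha\in\mathbb{N}_0^{\mathcal{A}(S)}$ set $|\alpha|=\sum_a\alpha(a)$, $a^{\alpha}=\prod_a a^{\alpha(a)}$. The catenary degree $c(S)$: for $\alpha,\gamma\in\mathbb{N}_0^{\mathcal{A}(S)}$ let $\gcd(\alpha,\gamma)(a)=\min\{\alpha(a),\gamma(a)\}$ and $d(\alpha,\gamma)=\max\{|\alpha-\gcd(\alpha,\gamma)|,|\gamma-\gcd(\alpha,\gamma)|\}$; $c(S)$ is the minimal non-negative integer $d$ such that whenever $a^{\alpha}=a^{\gamma}$ there is a sequence $\alpha=\alpha^{(0)},\dots,\alpha^{(k)}=\gamma$ with $a^{\alpha^{(j)}}=a^{\alpha^{(j+1)}}$ and $d(\alpha^{(j)},\alpha^{(j+1)})\le d$ for all $j$. For a commutative ring $R$, $R[x_a\mid a\in\mathcal{A}(S)]$ is the polynomial ring with the standard grading ($\deg x_a=1$), $R[S]$ is the semigroup ring, and $\pi_R$ is the $R$-algebra homomorphism with $x^{\alpha}=\prod_a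 x_a^{\alpha(a)}\mapsto a^{\alpha}$. A binomial is an element $x^{\alpha}-x^{\gamma}$. *)

From HB Require Import structures.
From mathcomp Require Import all_boot all_order all_algebra.
From mathcomp Require Import freeg mpoly.

Set Implicit Arguments.
Unset Strict Implicit.
Unset Printing Implicit Defensive.

Import Order.TTheory GRing.Theory.
Local Open Scope ring_scope.

(* Affine monoids: S is a subset of the free abelian group Z^n = 'rV[int]_n *)
(* (written additively).                                                   *)

Definition is_submonoid (n : nat) (S : 'rV[int]_n -> Prop) : Prop :=
  S 0 /\ (forall x y, S x -> S y -> S (x + y)).

Definition finitely_generated (n : nat) (S : 'rV[int]_n -> Prop) : Prop :=
  exists (m : nat) (g : 'I_m -> 'rV[int]_n),
    forall x, S x <-> exists c : 'I_m -> nat, x = \sum_(i < m) g i *+ c i.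

Definition affine_monoid (n : nat) (S : 'rV[int]_n -> Prop) : Prop :=
  is_submonoid S /\ finitely_generated S.

Definition unit_of (n : nat) (S : 'rV[int]_n -> Prop) (x : 'rV[int]_n) : Prop :=
  S x /\ exists y, S y /\ x + y = 0.

Definition reduced_monoid (n : nat) (S : 'rV[int]_n -> Prop) : Prop :=
  forall x, unit_of S x -> x = 0.

Definition atom (n : nat) (S : 'rV[int]_n -> Prop) (u : 'rV[int]_n) : Prop :=
  S u /\ ~ unit_of S u /\
  (forall x y, S x -> S y -> u = x + y -> unit_of S x \/ unit_of S y).

(* a : 'I_k -> 'rV[int]_n is an enumeration (without repetition) of the
   atoms of S; the variables x_a of the polynomial ring are indexed by 'I_k. *)
Definition atom_enum (n k : nat) (S : 'rV[int]_n -> Prop)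
  (a : 'I_k -> 'rV[int]_n) : Prop :=
  injective a /\ (forall u, atom S u <-> exists i, a i = u).

(* Factorizations alpha in N_0^{A(S)} are the monomials 'X_{1..k}.        *)

Definition fact_val (n k : nat) (a : 'I_k -> 'rV[int]_n) (al : 'X_{1..k})
  : 'rV[int]_n := \sum_(i < k) a i *+ al i.

Definition fgcd (k : nat) (al ga : 'X_{1..k}) : 'X_{1..k} :=
  [multinom minn (al i) (ga i) | i < k].

Definition fdist (k : nat) (al ga : 'X_{1..k}) : nat :=
  maxn (mdeg al - mdeg (fgcd al ga))%N (mdeg ga - mdeg (fgcd al ga))%N.

Definition catenary_ok (n k : nat) (a : 'I_k -> 'rV[int]_n) (d : nat) : Prop :=
  forall al ga : 'X_{1..k}, fact_val a al = fact_val a ga ->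
    exists s : seq 'X_{1..k},
      last al s = ga /\
      path (fun b c => (fact_val a b == fact_val a c) && (fdist b c <= d)%N) al s.

Definition is_min_nat (P : nat -> Prop) (d : nat) : Prop :=
  P d /\ forall e, P e -> (d <= e)%N.

Definition catenary_degree_is (n k : nat) (a : 'I_k -> 'rV[int]_n) (c : nat)
  : Prop := is_min_nat (catenary_ok a) c.

(* The R-algebra map pi_R : R[x_a] -> R[S], x^alpha |-> a^alpha.  R[S] is  *)
(* realised inside the free R-module {freeg 'rV[int]_n / R} (= R[Z^n]),     *)
(* which contains R[S] as the R-span of the basis elements << s >>, s in S. *)

Definition piR (R : comNzRingType) (n k : nat) (a : 'I_k -> 'rV[int]_n)
  (p : {mpoly R[k]}) : {freeg 'rV[int]_n / R} :=
  \sum_(m <- msupp p) << p@_m *g fact_val a m >>.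

Definition in_ker_pi (R : comNzRingType) (n k : nat) (a : 'I_k -> 'rV[int]_n)
  (p : {mpoly R[k]}) : Prop := piR a p = 0.

Definition binomial_deg_le (R : comNzRingType) (k d : nat) (f : {mpoly R[k]})
  : Prop :=
  exists al ga : 'X_{1..k}, f = 'X_[al] - 'X_[ga] /\
    (mdeg al <= d)%N /\ (mdeg ga <= d)%N.

Definition in_ideal_gen (R : comNzRingType) (k : nat)
  (G : {mpoly R[k]} -> Prop) (p : {mpoly R[k]}) : Prop :=
  exists s : seq ({mpoly R[k]} * {mpoly R[k]}),
    (forall x, x \in s -> G x.2) /\ p = \sum_(x <- s) x.1 * x.2.

Definition ker_gen_binom_le (R : comNzRingType) (n k : nat)
  (a : 'I_k -> 'rV[int]_n) (d : nat) : Prop :=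
  exists G : {mpoly R[k]} -> Prop,
    (forall f, G f -> binomial_deg_le d f) /\
    (forall p, in_ker_pi a p <-> in_ideal_gen G p).

From HB Require Import structures.
From mathcomp Require Import all_boot all_order all_algebra.
From mathcomp Require Import freeg mpoly.
From mathcomp Require Import zify.
From mathcomp Require Import boolp.

(** Nothing about [S] is needed: for any family [a] of vectors and any
   nontrivial commutative ring [R], ker pi_R is generated by binomials of degree
   at most [d] iff [d] satisfies the chain condition defining [c(S)].
   Given the chains, [x^al - x^ga] telescopes into monomial multiples of kernel
   binomials of degree at most [d], and every kernel element is a combination of
   the [x^m - x^m'] with [m'] a fixed factorization of [a^m].  Conversely, the
   indicator of the factorizations reachable from [al], extended linearly, takes
   equal values on [x^(m+b)] and [x^(m+c)] for each generator [x^b - x^c], so it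
   vanishes on the kernel; as [1 != 0] in [R], evaluating it at [x^al - x^ga]
   shows that [ga] is reachable. *)

Set Implicit Arguments.
Unset Strict Implicit.
Unset Printing Implicit Defensive.
Import Order.TTheory GRing.Theory.
Local Open Scope ring_scope.

Section LinearExtension.
Variables (R : comNzRingType) (k : nat).
Implicit Types (p q : {mpoly R[k]}) (f : 'X_{1..k} -> R).

Definition mlinext f p : R^o := \sum_(m <- msupp p) p@_m * f m.

Lemma mlinext_widen f p (s : seq 'X_{1..k}) : uniq s -> {subset msupp p <= s} ->
  mlinext f p = \sum_(m <- s) p@_m * f m.
Proof.
move=> uniq_s supp_s; rewrite [RHS](bigID (mem (msupp p))) /=.
rewrite [X in _ = _ + X]big1 ?addr0; last first.
  by move=> m /memN_msupp_eq0 ->; rewrite mul0r.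
rewrite -big_filter; apply: perm_big; apply: uniq_perm; rewrite ?filter_uniq //.
by move=> m; rewrite mem_filter andb_idr //; apply: supp_s.
Qed.

Lemma mlinext_is_linear f : linear (mlinext f).
Proof.
move=> c p q; set s := undup (msupp p ++ msupp q ++ msupp (c *: p + q)).
have wide r : {subset msupp r <= s} -> mlinext f r = \sum_(m <- s) r@_m * f m.
  exact/mlinext_widen/undup_uniq.
rewrite !wide => [|m|m|m]; rewrite ?mem_undup ?mem_cat.
- rewrite /GRing.scale /= mulr_sumr -big_split /=; apply: eq_bigr => m _.
  by rewrite mcoeffD mcoeffZ mulrDl mulrA.
all: by move=> ->; rewrite ?orbT.
Qed.

HB.instance Definition _ f := GRing.isLinear.Build R {mpoly R[k]} R^o _
  (mlinext f) (mlinext_is_linear f).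

Lemma mlinextX f m : mlinext f 'X_[m] = f m.
Proof. by rewrite /mlinext msuppX big_seq1 mcoeffX eqxx mul1r. Qed.

Lemma mlinext_mulr f c p : mlinext (fun m => f m * c) p = mlinext f p * c.
Proof. by rewrite /mlinext mulr_suml; apply: eq_bigr => m _; rewrite mulrA. Qed.

Lemma mlinext_mul_binomial f h b c :
  (forall m, f (m + b)%MM = f (m + c)%MM) ->
  mlinext f (h * ('X_[b] - 'X_[c])) = 0.
Proof.
move=> f_inv; rewrite {1}[h]mpolyE mulr_suml linear_sum big1 // => m _.
rewrite -scalerAl mulrBr -!mpolyXD linearZ linearB /= !mlinextX f_inv subrr.
exact: mulr0.
Qed.

End LinearExtension.

Section IdealGen.
Variables (R : comNzRingType) (k : nat) (G : {mpoly R[k]} -> Prop).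
Local Notation ideal := (in_ideal_gen G).

Lemma in_ideal_gen0 : ideal 0.
Proof. by exists [::]; rewrite big_nil. Qed.

Lemma in_ideal_genD p q : ideal p -> ideal q -> ideal (p + q).
Proof.
move=> [s [Gs ->]] [t [Gt ->]]; exists (s ++ t); rewrite big_cat; split=> //.
by move=> x; rewrite mem_cat => /orP[/Gs|/Gt].
Qed.

Lemma in_ideal_gen_mull h g : G g -> ideal (h * g).
Proof.
move=> Gg; exists [:: (h, g)]; rewrite big_seq1.
by split=> // x /[1!inE] /eqP->.
Qed.

Lemma in_ideal_genZ c p : ideal p -> ideal (c *: p).
Proof.
move=> [s [Gs ->]]; exists [seq (c *: x.1, x.2) | x <- s]; split.
  by move=> x /mapP [y /Gs Gy ->].
by rewrite big_map scaler_sumr; apply: eq_bigr => x _; rewrite scalerAl.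
Qed.

Lemma in_ideal_gen_sum (T : Type) (r : seq T) (F : T -> {mpoly R[k]}) :
  (forall i, ideal (F i)) -> ideal (\sum_(i <- r) F i).
Proof.
move=> idealF; elim: r => [|x r IHr]; rewrite ?big_nil ?big_cons.
  exact: in_ideal_gen0.
exact: in_ideal_genD.
Qed.

Lemma mlinext_in_ideal_gen f p :
  (forall g, G g -> exists b c, g = 'X_[b] - 'X_[c] /\
     forall m, f (m + b)%MM = f (m + c)%MM) ->
  ideal p -> mlinext f p = 0.
Proof.
move=> f_inv [s [Gs ->]]; rewrite linear_sum big_seq big1 // => x /Gs /f_inv.
by move=> [b [c [-> f_bc]]]; apply: mlinext_mul_binomial.
Qed.

End IdealGen.

Section Distance.
Variable k : nat.
Implicit Types m b c : 'X_{1..k}.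

Lemma fgcd_lel b c : (fgcd b c <= b)%MM.
Proof. by apply/mnm_lepP => i; rewrite mnmE geq_minl. Qed.

Lemma fgcd_ler b c : (fgcd b c <= c)%MM.
Proof. by apply/mnm_lepP => i; rewrite mnmE geq_minr. Qed.

Lemma fgcdDl m b c : fgcd (m + b)%MM (m + c)%MM = (m + fgcd b c)%MM.
Proof. by apply/mnmP => i; rewrite !mnmE addn_minr. Qed.

Lemma fdistDl m b c : fdist (m + b)%MM (m + c)%MM = fdist b c.
Proof. by rewrite /fdist fgcdDl !mdegD !subnDl. Qed.

Lemma fdist_le_mdeg b c : (fdist b c <= maxn (mdeg b) (mdeg c))%N.
Proof. by rewrite /fdist; lia. Qed.

Lemma mdeg_sub_fgcdl b c :
  mdeg (b - fgcd b c)%MM = (mdeg b - mdeg (fgcd b c))%N.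
Proof.
have := mdegD (b - fgcd b c) (fgcd b c).
by rewrite submK ?fgcd_lel // => ->; rewrite addnK.
Qed.

Lemma mdeg_sub_fgcdr b c :
  mdeg (c - fgcd b c)%MM = (mdeg c - mdeg (fgcd b c))%N.
Proof.
have := mdegD (c - fgcd b c) (fgcd b c).
by rewrite submK ?fgcd_ler // => ->; rewrite addnK.
Qed.

End Distance.

Section Factorizations.
Variables (n k : nat) (a : 'I_k -> 'rV[int]_n).
Implicit Types (m b c al ga : 'X_{1..k}) (d : nat).

Lemma fact_valD m1 m2 :
  fact_val a (m1 + m2)%MM = fact_val a m1 + fact_val a m2.
Proof.
by rewrite /fact_val -big_split; apply: eq_bigr => i _; rewrite mnmDE mulrnDr.
Qed.

Definition fiber_indicator (R : comNzRingType) (v : 'rV[int]_n) m : R :=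
  (fact_val a m == v)%:R.

Lemma in_ker_piP (R : comNzRingType) (p : {mpoly R[k]}) :
  in_ker_pi a p <-> forall v, mlinext (fiber_indicator R v) p = 0.
Proof.
have coeff_piR (v : 'rV[int]_n) :
    coeff v (piR a p) = mlinext (fiber_indicator R v) p.
  by rewrite /piR raddf_sum; apply: eq_bigr => m _; apply: coeffU.
split=> [ker_p v | zero_p]; first by rewrite -coeff_piR ker_p coeff0.
by apply/eqP/freeg_eqP => v; rewrite coeff0 coeff_piR.
Qed.

Lemma in_ker_pi_binomial (R : comNzRingType) b c :
  in_ker_pi a ('X_[b] - 'X_[c] : {mpoly R[k]}) <-> fact_val a b = fact_val a c.
Proof.
rewrite in_ker_piP; split=> [/(_ (fact_val a b)) | eq_bc v].
  rewrite linearB /= !mlinextX /fiber_indicator eqxx.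
  by case: eqP => // _ /eqP; rewrite subr0 oner_eq0.
by rewrite linearB /= !mlinextX /fiber_indicator eq_bc subrr.
Qed.

Definition catenary_step d b c :=
  (fact_val a b == fact_val a c) && (fdist b c <= d)%N.

Lemma catenary_stepDl d m b c : (mdeg b <= d)%N -> (mdeg c <= d)%N ->
  fact_val a b = fact_val a c -> catenary_step d (m + b)%MM (m + c)%MM.
Proof.
move=> deg_b deg_c eq_bc; rewrite /catenary_step !fact_valD eq_bc eqxx fdistDl.
by rewrite (leq_trans (fdist_le_mdeg b c)) // geq_max deg_b.
Qed.

Definition ker_binomial (R : comNzRingType) d (g : {mpoly R[k]}) : Prop :=
  exists b c, g = 'X_[b] - 'X_[c] /\ (mdeg b <= d)%N /\ (mdeg c <= d)%N /\
    fact_val a b = fact_val a c.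

Section CatenaryToKernel.
Variables (R : comNzRingType) (d : nat).
Local Notation ideal := (in_ideal_gen (@ker_binomial R d)).

Lemma catenary_step_in_ideal b c :
  catenary_step d b c -> ideal ('X_[b] - 'X_[c]).
Proof.
move=> /andP [/eqP eq_bc]; rewrite /fdist geq_max => /andP [deg_b deg_c].
set g := fgcd b c.
have [def_b def_c] : ((b - g) + g)%MM = b /\ ((c - g) + g)%MM = c.
  by split; apply: submK; [apply: fgcd_lel | apply: fgcd_ler].
rewrite -def_b -def_c !mpolyXD -mulrBl mulrC; apply: in_ideal_gen_mull.
exists (b - g)%MM, (c - g)%MM; rewrite mdeg_sub_fgcdl mdeg_sub_fgcdr.
do !split=> //.
by apply: (addIr (fact_val a g)); rewrite -!fact_valD def_b def_c.
Qed.

Lemma catenary_path_in_ideal al s :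
  path (catenary_step d) al s -> ideal ('X_[al] - 'X_[last al s]).
Proof.
elim: s al => [|be s IHs] al /=.
  by rewrite subrr => _; apply: in_ideal_gen0.
move=> /andP [step_al path_be]; rewrite -[_ - _](subrKA 'X_[be]).
by apply: in_ideal_genD; [apply: catenary_step_in_ideal | apply: IHs].
Qed.

End CatenaryToKernel.

Definition fact_rep m : 'X_{1..k} :=
  xchoose (ex_intro (fun m' => fact_val a m' == fact_val a m) m (eqxx _)).

Lemma fact_val_rep m : fact_val a (fact_rep m) = fact_val a m.
Proof.
exact/eqP/(xchooseP
  (ex_intro (fun m' => fact_val a m' == fact_val a m) m (eqxx _))).
Qed.

Lemma fact_rep_eq m m' :
  fact_val a m = fact_val a m' -> fact_rep m = fact_rep m'.
Proof. by move=> eq_mm'; apply: eq_xchoose => x; rewrite eq_mm'. Qed.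

Lemma fact_rep_eqE m mu :
  (fact_rep m == mu) = (fact_val a m == fact_val a mu) && (fact_rep mu == mu).
Proof.
apply/eqP/andP => [<- | [/eqP/fact_rep_eq -> /eqP //]].
by rewrite fact_val_rep (fact_rep_eq (fact_val_rep m)).
Qed.

Lemma ker_sum_rep_eq0 (R : comNzRingType) (p : {mpoly R[k]}) :
  in_ker_pi a p -> \sum_(m <- msupp p) p@_m *: 'X_[fact_rep m] = 0.
Proof.
move=> /in_ker_piP ker_p; apply/mpolyP => mu; rewrite mcoeff0 raddf_sum /=.
under eq_bigr => m _ do rewrite mcoeffZ mcoeffX fact_rep_eqE -mulnb natrM.
pose c : R := (fact_rep mu == mu)%:R.
change (mlinext (fun m => fiber_indicator R (fact_val a mu) m * c) p = 0).
by rewrite mlinext_mulr ker_p mul0r.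
Qed.

Lemma catenary_ker_gen_binom (R : comNzRingType) d :
  catenary_ok a d -> ker_gen_binom_le R a d.
Proof.
move=> cat_d; exists (@ker_binomial R d); split.
  by move=> g [b [c [-> [deg_b [deg_c _]]]]]; exists b, c.
move=> p; split=> [ker_p | ideal_p]; last first.
  apply/in_ker_piP => v; apply: mlinext_in_ideal_gen ideal_p.
  move=> g [b [c [-> [_ [_ eq_bc]]]]]; exists b, c; split=> // m.
  by rewrite /fiber_indicator !fact_valD eq_bc.
have -> : p = \sum_(m <- msupp p) p@_m *: ('X_[m] - 'X_[fact_rep m]).
  rewrite (eq_bigr _ (fun m _ => scalerBr _ _ _)) sumrB ker_sum_rep_eq0 //.
  by rewrite subr0 -mpolyE.
apply: in_ideal_gen_sum => m; apply: in_ideal_genZ.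
have [s [<- path_s]] := cat_d m _ (esym (fact_val_rep m)).
exact: catenary_path_in_ideal.
Qed.

Section Reachability.
Variables (d : nat) (al : 'X_{1..k}).

Definition reachable mu :=
  exists s, last al s = mu /\ path (catenary_step d) al s.

Lemma reachable_step mu nu :
  reachable mu -> catenary_step d mu nu -> reachable nu.
Proof.
move=> [s [last_s path_s]] step; exists (rcons s nu).
by rewrite last_rcons rcons_path path_s last_s.
Qed.

Lemma reachableDl m b c : (mdeg b <= d)%N -> (mdeg c <= d)%N ->
  fact_val a b = fact_val a c -> reachable (m + b)%MM <-> reachable (m + c)%MM.
Proof.
move=> deg_b deg_c eq_bc.
by split=> /reachable_step; apply; apply: catenary_stepDl.
Qed.

End Reachability.

Lemma ker_gen_binom_catenary (R : comNzRingType) d :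
  ker_gen_binom_le R a d -> catenary_ok a d.
Proof.
move=> [G [G_binom kerE]] al ga eq_alga.
pose f mu : R := `[< reachable d al mu >]%:R.
have f_inv g : G g -> exists b c, g = 'X_[b] - 'X_[c] /\
    forall m, f (m + b)%MM = f (m + c)%MM.
  move=> Gg; have [b [c [def_g [deg_b deg_c]]]] := G_binom g Gg.
  have /in_ker_pi_binomial eq_bc :
      in_ker_pi a ('X_[b] - 'X_[c] : {mpoly R[k]}).
    by rewrite -def_g; apply/kerE; rewrite -[g]mul1r; apply: in_ideal_gen_mull.
  exists b, c; split=> // m.
  by rewrite /f (asbool_equiv_eq (reachableDl al m deg_b deg_c eq_bc)).
have /kerE/(mlinext_in_ideal_gen f_inv) :
  in_ker_pi a ('X_[al] - 'X_[ga] : {mpoly R[k]}) by apply/in_ker_pi_binomial.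
rewrite linearB /= !mlinextX /f asboolT; last by exists [::].
by case: asboolP => // _ /eqP; rewrite subr0 oner_eq0.
Qed.

Lemma ker_gen_binom_catenaryE (R : comNzRingType) d :
  ker_gen_binom_le R a d <-> catenary_ok a d.
Proof.
by split; [apply: ker_gen_binom_catenary | apply: catenary_ker_gen_binom].
Qed.

End Factorizations.

Lemma eq_is_min_nat (P Q : nat -> Prop) c : (forall d, P d <-> Q d) ->
  is_min_nat P c <-> is_min_nat Q c.
Proof.
by move=> PQ; split=> [[/PQ Pc minc] | [/PQ Qc minc]]; split=> // e /PQ /minc.
Qed.

Theorem corollary2p6 (n k : nat) (S : 'rV[int]_n -> Prop)
  (a : 'I_k -> 'rV[int]_n) :
  affine_monoid S -> reduced_monoid S -> atom_enum S a ->
  (forall c : nat,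
     catenary_degree_is a c <->
     is_min_nat (fun d => exists R : comNzRingType, ker_gen_binom_le R a d) c) /\
  (forall d : nat,
     (exists R : comNzRingType, ker_gen_binom_le R a d) <->
     (forall R : comNzRingType, ker_gen_binom_le R a d)).
Proof.
move=> _ _ _.
have someR_catenary d :
    (exists R : comNzRingType, ker_gen_binom_le R a d) <-> catenary_ok a d.
  split=> [[R] | cat_d]; first exact: (ker_gen_binom_catenaryE a R d).1.
  by exists int; apply: (ker_gen_binom_catenaryE a int d).2.
split=> [c | d]; first by apply: eq_is_min_nat => d; rewrite someR_catenary.
rewrite someR_catenary; split=> [cat_d R | /(_ int)].
  exact: (ker_gen_binom_catenaryE a R d).2.
exact: (ker_gen_binom_catenaryE a int d).1.
Qed.
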